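(* Let $g$ be a blurred permutation on $[n]$ with associated partition $P_1,\dots,P_m$, and let $f$ be a multipermutation on $[n]$ that does not respect $g$. Then either $(f\circ g)\circ(g^{-1}\circ f^{-1})$ or $(f^{-1}\circ g^{-1})\circ(g\circ f)$ is a reflexive and symmetric multipermutation that is not a sub-multipermutation of $g$.
   Context: A multipermutation on $[n]$ is a map $f:[n]\to\mathcal{P}([n])\setminus\{\emptyset\}$ with every $y$ in some $f(x)$; $f^{-1}:x\mapsto\{y:x\in f(y)\}$; $(g\circ f)(x)=\{z:\exists y\,(y\in f(x)\wedge z\in g(y))\}$; $f$ is a sub-multipermutation of $h$ if $f(x)\subseteq h(x)$ for all $x$; symmetric means $a\in f(b)\iff b\in f(a)$, reflexive means $a\in f(a)$ for all $a$. A blurred permutation $g$ with associated partition $P_1,\dots,P_m$ is one for which there is a permutation $\sigma$ of $[m]$ ($m\le n$) with $i\in P_i$ for $i\in[m]$ and $g(x)=P_{\sigma(i)}$ for all $x\in P_i$. A multipermutation $f$ respects $g$ if neither (i) there exist $a,b$ in the same block $P_i$ and $c,d$ in distinct blocks with $c\in f(a)$, $d\in f(b)$, nor (ii) there exist $a,b$ in distinct blocks and $c,d$ in the same block with $c\in f(a)$, $d\in f(b)$. *)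

(* [n] is modelled as 'I_n (elements 0..n-1). *)
From mathcomp Require Import all_boot all_fingroup.
Set Implicit Arguments. Unset Strict Implicit. Unset Printing Implicit Defensive.

Definition mperm (n : nat) := 'I_n -> {set 'I_n}.

Definition is_multiperm n (f : mperm n) : Prop :=
  (forall x, f x != set0) /\ (forall y, exists x, y \in f x).

Definition minv n (f : mperm n) : mperm n := fun x => [set y | x \in f y].

Definition mcomp n (g f : mperm n) : mperm n := fun x => [set z | [exists y, (y \in f x) && (z \in g y)]].

Definition sub_mperm n (f h : mperm n) : Prop := forall x, f x \subset h x.

Definition msym n (f : mperm n) : Prop := forall a b, (a \in f b) <-> (b \in f a).

Definition mrefl n (f : mperm n) : Prop := forall a, a \in f a.

Definition is_partition n m (P : 'I_m -> {set 'I_n}) : Prop :=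
  (forall i j, i != j -> [disjoint P i & P j]) /\ (forall x, exists i, x \in P i).

Definition blurred_with n m (g : mperm n) (P : 'I_m -> {set 'I_n}) : Prop :=
  m <= n /\ is_partition P /\
  (forall i : 'I_m, forall Hi : i < n, Ordinal Hi \in P i) /\
  exists s : {perm 'I_m}, forall (i : 'I_m) (x : 'I_n), x \in P i -> g x = P (s i).

Definition respects n m (f : mperm n) (P : 'I_m -> {set 'I_n}) : Prop :=
  ~ (exists (a b c d : 'I_n) (i j k : 'I_m),
        [/\ (a \in P i) && (b \in P i), c \in P j, d \in P k, j != k & (c \in f a) && (d \in f b)])
  /\
  ~ (exists (a b c d : 'I_n) (i j k : 'I_m),
        [/\ a \in P i, b \in P j, i != j, (c \in P k) && (d \in P k) & (c \in f a) && (d \in f b)]).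

(* Writing k^-1 for minv k, both compositions have the shape k o k^-1: the first
   with k = f o g, the second with k = (g o f)^-1, since (f o g)^-1 = g^-1 o f^-1.
   Now z lies in (k o k^-1)(x) exactly when x and z lie in a common image k(y), so
   such a composition is symmetric, and reflexive (hence a multipermutation) as soon
   as k is a multipermutation.  A blurred permutation maps every point onto a whole
   block, and every block is the image of its representative point.  Hence a
   violation of condition (i) places two points of distinct blocks into one set of
   the first composition, and a violation of (ii) does the same for the second;
   neither set can then be contained in an image of g, which lies within one block. *)
From Stdlib Require Import Classical FunctionalExtensionality.
From mathcomp Require Import all_boot all_fingroup.

Set Implicit Arguments.
Unset Strict Implicit.
Unset Printing Implicit Defensive.

Section Multipermutations.

Variable n : nat.
Implicit Types f g h k : mperm n.

Lemma mem_minv k x y : (y \in minv k x) = (x \in k y).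
Proof. by rewrite inE. Qed.

Lemma mem_mcomp g f x z : (z \in mcomp g f x) = [exists y, (y \in f x) && (z \in g y)].
Proof. by rewrite inE. Qed.

Lemma minvK k : minv (minv k) = k.
Proof. by apply: functional_extensionality => x; apply/setP => y; rewrite !mem_minv. Qed.

Lemma minv_mcomp f g : minv (mcomp f g) = mcomp (minv g) (minv f).
Proof.
apply: functional_extensionality => x; apply/setP => z.
rewrite mem_minv !mem_mcomp; apply: eq_existsb => y.
by rewrite !mem_minv andbC.
Qed.

Lemma minv_multiperm k : is_multiperm k -> is_multiperm (minv k).
Proof.
move=> [k_neq0 k_cover]; split=> [x | y].
- by have [y xky] := k_cover x; apply/set0Pn; exists y; rewrite mem_minv.
- by have /set0Pn [x xky] := k_neq0 y; exists x; rewrite mem_minv.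
Qed.

Lemma mcomp_multiperm f g : is_multiperm f -> is_multiperm g -> is_multiperm (mcomp f g).
Proof.
move=> [f_neq0 f_cover] [g_neq0 g_cover]; split=> [x | z].
- have /set0Pn [y ygx] := g_neq0 x; have /set0Pn [z zfy] := f_neq0 y.
  by apply/set0Pn; exists z; rewrite mem_mcomp; apply/existsP; exists y; rewrite ygx.
- have [y zfy] := f_cover z; have [x ygx] := g_cover y.
  by exists x; rewrite mem_mcomp; apply/existsP; exists y; rewrite ygx.
Qed.

Lemma mrefl_multiperm h : mrefl h -> is_multiperm h.
Proof. by move=> hR; split=> [x | y]; [apply/set0Pn; exists x | exists y]. Qed.

Lemma mem_mcomp_minv k x z :
  (z \in mcomp k (minv k) x) = [exists y, (x \in k y) && (z \in k y)].
Proof. by rewrite mem_mcomp; apply: eq_existsb => y; rewrite mem_minv. Qed.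

Lemma mem_minv_mcomp k x z :
  (z \in mcomp (minv k) k x) = [exists y, (y \in k x) && (y \in k z)].
Proof. by rewrite mem_mcomp; apply: eq_existsb => y; rewrite mem_minv. Qed.

Lemma mcomp_minv_refl_sym k :
  is_multiperm k ->
  let h := mcomp k (minv k) in [/\ is_multiperm h, mrefl h & msym h].
Proof.
move=> [_ k_cover] h.
have hR : mrefl h.
  move=> x; have [y xky] := k_cover x.
  by rewrite mem_mcomp_minv; apply/existsP; exists y; rewrite xky.
split=> //; first exact: mrefl_multiperm.
move=> a b; rewrite !mem_mcomp_minv.
by split=> /existsP [y aby]; apply/existsP; exists y; rewrite andbC.
Qed.

Lemma minv_mcomp_refl_sym k :
  is_multiperm k ->
  let h := mcomp (minv k) k in [/\ is_multiperm h, mrefl h & msym h].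
Proof. by move=> kM; rewrite -{2}(minvK k); apply/mcomp_minv_refl_sym/minv_multiperm. Qed.

End Multipermutations.

Lemma partition_block_uniq n m (P : 'I_m -> {set 'I_n}) x i j :
  is_partition P -> x \in P i -> x \in P j -> i = j.
Proof.
move=> [P_disj _] xPi xPj; apply/eqP; apply: contraLR isT => /P_disj.
by rewrite disjoint_subset => /subsetP /(_ x xPi); rewrite inE xPj.
Qed.

Section BlurredPermutations.

Variables (n m : nat) (g : mperm n) (P : 'I_m -> {set 'I_n}).
Hypothesis gP : blurred_with g P.

Lemma blurred_eq_on_block x y i : x \in P i -> y \in P i -> g x = g y.
Proof. by have [_ [_ [_ [s gE]]]] := gP => /gE -> /gE ->. Qed.

Lemma blurred_image_block x : exists i, g x = P i.
Proof.
have [_ [[_ P_cover] [_ [s gE]]]] := gP.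
by have [i xPi] := P_cover x; exists (s i); apply: gE.
Qed.

Lemma blurred_block_image i : exists x, g x = P i.
Proof.
have [le_mn [_ [P_repr [s gE]]]] := gP.
have lt_n : s^-1%g i < n by apply: leq_trans (ltn_ord _) le_mn.
by exists (Ordinal lt_n); rewrite (gE _ _ (P_repr _ lt_n)) permKV.
Qed.

Lemma blurred_not_sub (h : mperm n) w x y i j :
  x \in P i -> y \in P j -> i != j -> x \in h w -> y \in h w -> ~ sub_mperm h g.
Proof.
move=> xPi yPj /eqP neq_ij xhw yhw /(_ w) /subsetP hg.
have [_ [P_part _]] := gP; have [l gw] := blurred_image_block w.
have xPl : x \in P l by rewrite -gw hg.
have yPl : y \in P l by rewrite -gw hg.
apply: neq_ij; rewrite (partition_block_uniq P_part xPi xPl).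
exact: partition_block_uniq P_part yPl yPj.
Qed.

End BlurredPermutations.

Theorem lemma3p5 (n m : nat) (g f : mperm n) (P : 'I_m -> {set 'I_n}) :
  is_multiperm g -> blurred_with g P ->
  is_multiperm f -> ~ respects f P ->
  (let h := mcomp (mcomp f g) (mcomp (minv g) (minv f)) in
   [/\ is_multiperm h, mrefl h, msym h & ~ sub_mperm h g])
  \/
  (let h := mcomp (mcomp (minv f) (minv g)) (mcomp g f) in
   [/\ is_multiperm h, mrefl h, msym h & ~ sub_mperm h g]).
Proof.
move=> gM gP fM /not_and_or [/NNPP violates_i | /NNPP violates_ii].
- left; rewrite -minv_mcomp.
  have [hM hR hS] := mcomp_minv_refl_sym (mcomp_multiperm fM gM).
  split=> //.
  have [a [b [c [d [i [j [k [/andP [aPi bPi] cPj dPk neq_jk /andP [cfa dfb]]]]]]]]] := violates_i.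
  have [y gy] := blurred_block_image gP i.
  have cfgy : c \in mcomp f g y by rewrite mem_mcomp; apply/existsP; exists a; rewrite gy aPi.
  have dfgy : d \in mcomp f g y by rewrite mem_mcomp; apply/existsP; exists b; rewrite gy bPi.
  apply: (blurred_not_sub gP cPj dPk neq_jk (hR c)).
  by rewrite mem_mcomp_minv; apply/existsP; exists y; rewrite cfgy.
- right; rewrite -minv_mcomp.
  have [hM hR hS] := minv_mcomp_refl_sym (mcomp_multiperm gM fM).
  split=> //.
  have [a [b [c [d [i [j [k [aPi bPj neq_ij /andP [cPk dPk] /andP [cfa dfb]]]]]]]]] := violates_ii.
  have /set0Pn [w wgc] := gM.1 c.
  have wgfa : w \in mcomp g f a by rewrite mem_mcomp; apply/existsP; exists c; rewrite cfa.
  have wgfb : w \in mcomp g f b.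
    by rewrite mem_mcomp; apply/existsP; exists d; rewrite dfb -(blurred_eq_on_block gP cPk dPk).
  apply: (blurred_not_sub gP aPi bPj neq_ij (hR a)).
  by rewrite mem_minv_mcomp; apply/existsP; exists w; rewrite wgfa.
Qed.
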